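(* Let $X$ and $Y$ be $n$-dimensional compacta, $n\geq 1$. If $H^n(X)\neq 0$, then there is an $\varepsilon>0$ such that every $\varepsilon$-mapping $f:X\to Y$ satisfies $H^n(f)\neq 0$, where $H^n(f):H^n(Y)\to H^n(X)$ is the induced homomorphism.
   Context: A compactum is a compact metric space; all maps are continuous. $H^*(\cdot)$ denotes Čech cohomology with integer coefficients. A map $f:X\to Y$ from a metric space is an $\varepsilon$-mapping if $\operatorname{diam} f^{-1}(y)<\varepsilon$ for every $y\in f(X)$. *)

From Stdlib Require Import Reals ZArith List.
Import ListNotations.
Open Scope R_scope.

Record MetricSpace := {
  mcarrier :> Type;
  dist : mcarrier -> mcarrier -> R;
  dist_nonneg : forall x y, 0 <= dist x y;
  dist_sym : forall x y, dist x y = dist y x;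
  dist_eq0 : forall x y, dist x y = 0 <-> x = y;
  dist_tri : forall x y z, dist x z <= dist x y + dist y z }.

Definition is_open {X : MetricSpace} (U : X -> Prop) : Prop :=
  forall x, U x -> exists r, 0 < r /\ forall y, dist X x y < r -> U y.

Definition compact_space (X : MetricSpace) : Prop :=
  forall (I : Type) (U : I -> X -> Prop),
    (forall i, is_open (U i)) -> (forall x, exists i, U i x) ->
    exists l : list I, forall x, exists i, In i l /\ U i x.

Definition continuous {X Y : MetricSpace} (f : X -> Y) : Prop :=
  forall x eps, 0 < eps -> exists delta, 0 < delta /\
    forall x', dist X x x' < delta -> dist Y (f x) (f x') < eps.

Definition diam_lt {X : MetricSpace} (A : X -> Prop) (eps : R) : Prop :=
  exists d, d < eps /\ forall x x', A x -> A x' -> dist X x x' <= d.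

Definition eps_mapping {X Y : MetricSpace} (eps : R) (f : X -> Y) : Prop :=
  forall y, (exists x, f x = y) -> diam_lt (fun x => f x = y) eps.

Record fcover (X : Type) := { fc_size : nat; fc_set : nat -> X -> Prop }.
Arguments fc_size {X}.
Arguments fc_set {X}.

Definition open_fcover {X : MetricSpace} (U : fcover X) : Prop :=
  (forall i, (i < fc_size U)%nat -> is_open (fc_set U i)) /\
  (forall x, exists i, (i < fc_size U)%nat /\ fc_set U i x).

Definition refines_via {X : Type} (W U : fcover X) (lam : nat -> nat) : Prop :=
  forall j, (j < fc_size W)%nat ->
    (lam j < fc_size U)%nat /\ forall x, fc_set W j x -> fc_set U (lam j) x.

Definition order_le {X : Type} (V : fcover X) (n : nat) : Prop :=
  forall l : list nat, NoDup l -> Forall (fun i => (i < fc_size V)%nat) l ->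
    length l = (n + 2)%nat -> ~ exists x, Forall (fun i => fc_set V i x) l.

Definition dim_le (X : MetricSpace) (n : nat) : Prop :=
  forall U : fcover X, open_fcover U ->
    exists V : fcover X, open_fcover V /\ (exists lam, refines_via V U lam) /\
      order_le V n.

Definition covering_dim (X : MetricSpace) (n : nat) : Prop :=
  dim_le X n /\ match n with O => inhabited X | S m => ~ dim_le X m end.

(* an (ordered) m-simplex of the nerve: a list of m+1 indices whose members meet *)
Definition is_simplex {X : Type} (U : fcover X) (m : nat) (s : list nat) : Prop :=
  length s = S m /\ Forall (fun i => (i < fc_size U)%nat) s /\
  exists x, Forall (fun i => fc_set U i x) s.

Fixpoint del {A : Type} (j : nat) (l : list A) : list A :=
  match l, j with
  | [], _ => []
  | _ :: t, O => t
  | x :: t, S j' => x :: del j' t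
  end.

Definition sgn (j : nat) : Z := if Nat.even j then 1%Z else (-1)%Z.

Definition cochain := list nat -> Z.

Definition cobdry (b : cochain) : cochain := fun s =>
  fold_right Z.add 0%Z (map (fun j => (sgn j * b (del j s))%Z) (seq 0 (length s))).

Definition is_cocycle {X : Type} (U : fcover X) (m : nat) (c : cochain) : Prop :=
  forall s, is_simplex U (S m) s -> cobdry c s = 0%Z.

Definition is_coboundary {X : Type} (U : fcover X) (m : nat) (c : cochain) : Prop :=
  match m with
  | O => forall s, is_simplex U 0 s -> c s = 0%Z
  | S m' => exists b : cochain, forall s, is_simplex U m s -> c s = cobdry b s
  end.

(* a representative of an element of H^m(X): a finite open cover with an m-cocycle *)
Definition cech_rep {X : MetricSpace} (m : nat) (U : fcover X) (c : cochain) : Prop :=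
  open_fcover U /\ is_cocycle U m c.

(* the class of (U,c) is zero in the direct limit: it becomes a coboundary
   after passing to some refinement *)
Definition cech_class_zero {X : MetricSpace} (m : nat) (U : fcover X) (c : cochain)
  : Prop :=
  exists (W : fcover X) (lam : nat -> nat),
    open_fcover W /\ refines_via W U lam /\
    is_coboundary W m (fun s => c (map lam s)).

Definition cech_nonzero (X : MetricSpace) (m : nat) : Prop :=
  exists (U : fcover X) (c : cochain), cech_rep m U c /\ ~ cech_class_zero m U c.

Definition preimage_cover {X Y : MetricSpace} (f : X -> Y) (U : fcover Y) : fcover X :=
  {| fc_size := fc_size U; fc_set := fun i x => fc_set U i (f x) |}.

(* H^m(f) : H^m(Y) -> H^m(X) sends [(U,c)] to [(f^-1 U, c)];
   H^m(f) <> 0 means some class is sent to a nonzero class *)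
Definition cech_map_nonzero {X Y : MetricSpace} (f : X -> Y) (m : nat) : Prop :=
  exists (U : fcover Y) (c : cochain),
    cech_rep m U c /\ ~ cech_class_zero m (preimage_cover f U) c.

(** Let [U] carry a nonzero class [alpha] of the Cech group [H^n(X)] and let
    [lam] be a Lebesgue number of [U]; we take [eps = lam / 2].  For an
    [eps]-mapping [f : X -> Y], points of [X] with nearby images are
    [lam]-close.  Cover [Y] by small balls about points of [f X] together with
    [Y \ f X], refine to a cover of order [<= n] (as [dim Y <= n]) and merge
    the members missing [f X] into one member [N].  The members other than [N]
    map to members of [U], giving a simplicial map [g] from the nerve of this
    cover minus [N] to the nerve of [U].  The pullback of [alpha] along [g]
    extends across the star of [N] by a cone construction, because the link of
    [N] has dimension [< n] and so carries no [n]-dimensional cohomology; the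
    class so obtained on [Y] is sent by [H^n(f)] to (a refinement of) [alpha]. *)

From Pilot Require Import Defs.
From Stdlib Require Import Reals ZArith List Lia Lra Classical FunctionalExtensionality ClassicalEpsilon.
Import Pilot.Defs.
Import ListNotations.
Open Scope R_scope.

Definition head_slice (x : nat) (b : cochain) : cochain := fun u => b (x :: u).

Lemma fold_sum_opp (l : list nat) (h : nat -> Z) :
  fold_right Z.add 0%Z (map (fun j => (- h j)%Z) l) = (- fold_right Z.add 0%Z (map h l))%Z.
Proof. induction l; simpl; lia. Qed.

Lemma cobdry_cons b x t : cobdry b (x :: t) = (b t - cobdry (head_slice x b) t)%Z.
Proof.
  unfold cobdry. cbn [length].
  change (seq 0 (S (length t))) with (0%nat :: seq 1 (length t)).
  rewrite <- seq_shift, map_cons, map_map. cbn [fold_right del].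
  replace (map (fun j => (sgn (S j) * b (x :: del j t))%Z) (seq 0 (length t)))
    with (map (fun j => (- (sgn j * head_slice x b (del j t)))%Z) (seq 0 (length t))).
  - rewrite fold_sum_opp. change (sgn 0) with 1%Z. lia.
  - apply map_ext; intro j. unfold head_slice, sgn.
    rewrite Nat.even_succ; unfold Nat.odd. destruct (Nat.even j); cbn [negb]; lia.
Qed.

Lemma cobdry_add b b' t :
  cobdry (fun u => (b u + b' u)%Z) t = (cobdry b t + cobdry b' t)%Z.
Proof.
  revert b b'; induction t as [|x t IH]; intros b b'; [reflexivity|].
  rewrite !cobdry_cons.
  change (head_slice x (fun u => (b u + b' u)%Z))
    with (fun u => (head_slice x b u + head_slice x b' u)%Z).
  rewrite IH. lia.
Qed.

Lemma cobdry_opp b t : cobdry (fun u => (- b u)%Z) t = (- cobdry b t)%Z.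
Proof.
  revert b; induction t as [|x t IH]; intros b; [reflexivity|].
  rewrite !cobdry_cons.
  change (head_slice x (fun u => (- b u)%Z)) with (fun u => (- head_slice x b u)%Z).
  rewrite IH. lia.
Qed.

Lemma cobdry_sub b b' t :
  cobdry (fun u => (b u - b' u)%Z) t = (cobdry b t - cobdry b' t)%Z.
Proof.
  change (fun u => (b u - b' u)%Z) with (fun u => (b u + (fun v => (- b' v)%Z) u)%Z).
  rewrite cobdry_add, cobdry_opp. lia.
Qed.

Lemma cobdry_zero t : cobdry (fun _ => 0%Z) t = 0%Z.
Proof.
  induction t as [|x t IH]; [reflexivity|].
  rewrite cobdry_cons. unfold head_slice. rewrite IH. reflexivity.
Qed.

Lemma head_slice_cobdry x b :
  head_slice x (cobdry b) = fun u => (b u - cobdry (head_slice x b) u)%Z.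
Proof. apply functional_extensionality; intro u. apply cobdry_cons. Qed.

Lemma cobdry_cobdry b t : cobdry (cobdry b) t = 0%Z.
Proof.
  revert b; induction t as [|x t IH]; intros b; [reflexivity|].
  rewrite cobdry_cons, head_slice_cobdry, cobdry_sub, IH. lia.
Qed.

Lemma cobdry_map (g : nat -> nat) b s :
  cobdry (fun t => b (map g t)) s = cobdry b (map g s).
Proof.
  revert b; induction s as [|x s IH]; intros b; [reflexivity|].
  cbn [map]. rewrite !cobdry_cons, <- IH. reflexivity.
Qed.

Definition avoid (v : nat) (phi : cochain) : cochain :=
  fun t => if in_dec Nat.eq_dec v t then 0%Z else phi t.

(** The cone operator with apex [v]: if [v] occurs exactly once in [s], at
    position [k], then [cone v phi s = (-1)^k phi (s without v)]; otherwise it is 0.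
    It is the homotopy used to extend cochains across the star of a vertex. *)
Fixpoint cone (v : nat) (phi : cochain) (s : list nat) : Z :=
  match s with
  | [] => 0%Z
  | x :: t => if Nat.eq_dec x v then avoid v phi t
              else (- cone v (head_slice x phi) t)%Z
  end.

Lemma cone_absent v phi t : ~ In v t -> cone v phi t = 0%Z.
Proof.
  revert phi; induction t as [|x t IH]; intros phi Hv; [reflexivity|]. cbn [cone].
  destruct (Nat.eq_dec x v) as [->|Hx]; [now destruct Hv; left|].
  rewrite IH; [reflexivity|]. intro H; apply Hv; right; exact H.
Qed.

Lemma cone_sub v phi psi t :
  cone v (fun u => (phi u - psi u)%Z) t = (cone v phi t - cone v psi t)%Z.
Proof.
  revert phi psi; induction t as [|x t IH]; intros phi psi; [reflexivity|]. cbn [cone].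
  destruct (Nat.eq_dec x v).
  - unfold avoid. destruct (in_dec Nat.eq_dec v t); lia.
  - change (head_slice x (fun u => (phi u - psi u)%Z))
      with (fun u => (head_slice x phi u - head_slice x psi u)%Z).
    rewrite IH. lia.
Qed.

Lemma cone_zero v s : cone v (fun _ => 0%Z) s = 0%Z.
Proof.
  induction s as [|x t IH]; [reflexivity|]. cbn [cone].
  destruct (Nat.eq_dec x v).
  - unfold avoid. now destruct (in_dec Nat.eq_dec v t).
  - change (head_slice x (fun _ => 0%Z)) with (fun _ : list nat => 0%Z). rewrite IH. reflexivity.
Qed.

Lemma cone_agree v phi phi' s :
  (forall u, ~ In v u -> incl u s -> S (length u) = length s -> phi u = phi' u) ->
  cone v phi s = cone v phi' s.
Proof.
  revert phi phi'; induction s as [|x t IH]; intros phi phi' H; [reflexivity|]. cbn [cone].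
  destruct (Nat.eq_dec x v) as [Hx|Hx].
  - unfold avoid. destruct (in_dec Nat.eq_dec v t) as [|Hv]; [reflexivity|].
    apply H; [exact Hv | intros a Ha; right; exact Ha | reflexivity].
  - f_equal. apply IH. intros u Hu Hi Hl. apply H.
    + intros [Hxv|Hvu]; [exact (Hx Hxv) | exact (Hu Hvu)].
    + intros a [Ha|Ha]; [left; exact Ha | right; exact (Hi a Ha)].
    + cbn; lia.
Qed.

Lemma head_slice_avoid x v phi :
  x <> v -> head_slice x (avoid v phi) = avoid v (head_slice x phi).
Proof.
  intros Hx. apply functional_extensionality; intro u. unfold head_slice, avoid.
  destruct (in_dec Nat.eq_dec v (x :: u)) as [[Hvx|Hu]|Hn];
    destruct (in_dec Nat.eq_dec v u) as [Hu'|Hn']; try reflexivity.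
  - exfalso; exact (Hx Hvx).
  - exfalso; exact (Hn' Hu).
  - exfalso; apply Hn; right; exact Hu'.
Qed.

Lemma cobdry_avoid v phi t :
  cobdry (avoid v phi) t =
  if in_dec Nat.eq_dec v t then cone v phi t else cobdry phi t.
Proof.
  revert phi; induction t as [|x t IH]; intros phi; [reflexivity|].
  rewrite cobdry_cons. cbn [cone].
  destruct (Nat.eq_dec x v) as [<-|Hx].
  - replace (head_slice x (avoid x phi)) with (fun _ : list nat => 0%Z).
    + rewrite cobdry_zero. destruct (in_dec Nat.eq_dec x (x :: t)) as [|Hn];
        [lia | now destruct Hn; left].
    + apply functional_extensionality; intro u. unfold head_slice, avoid.
      destruct (in_dec Nat.eq_dec x (x :: u)) as [|Hn]; [reflexivity | now destruct Hn; left].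
  - rewrite head_slice_avoid, IH by exact Hx. unfold avoid.
    destruct (in_dec Nat.eq_dec v t) as [Hv|Hv];
      destruct (in_dec Nat.eq_dec v (x :: t)) as [Hv'|Hv'].
    + lia.
    + exfalso; apply Hv'; right; exact Hv.
    + destruct Hv' as [Hvx|Hvt]; [exfalso; exact (Hx Hvx) | exfalso; exact (Hv Hvt)].
    + rewrite cobdry_cons. reflexivity.
Qed.

Lemma cobdry_cone v phi s : cobdry (cone v phi) s = (- cone v (cobdry phi) s)%Z.
Proof.
  revert phi; induction s as [|x t IH]; intros phi; [reflexivity|].
  rewrite cobdry_cons. cbn [cone].
  destruct (Nat.eq_dec x v) as [<-|Hx].
  - replace (head_slice x (cone x phi)) with (avoid x phi).
    + rewrite cobdry_avoid. unfold avoid.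
      destruct (in_dec Nat.eq_dec x t) as [|Hn]; [lia|].
      rewrite cone_absent by exact Hn. lia.
    + apply functional_extensionality; intro u. unfold head_slice. cbn [cone].
      destruct (Nat.eq_dec x x) as [|Hn]; [reflexivity | now destruct Hn].
  - replace (head_slice x (cone v phi)) with (fun u => (- cone v (head_slice x phi) u)%Z).
    + rewrite cobdry_opp, IH, head_slice_cobdry, cone_sub. lia.
    + apply functional_extensionality; intro u. unfold head_slice. cbn [cone].
      destruct (Nat.eq_dec x v) as [Hxv|]; [exfalso; exact (Hx Hxv) | reflexivity].
Qed.

(** A family of vertex lists closed under passing to sublists: the ordered
    simplices (repetitions allowed) of a simplicial complex. *)
Definition sub_closed (P : list nat -> Prop) : Prop :=
  forall t t', P t -> incl t' t -> P t'.

Definition link (P : list nat -> Prop) (v : nat) (u : list nat) : Prop :=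
  P (v :: u) /\ ~ In v u.

Lemma incl_cons_in (v : nat) (u t : list nat) : In v t -> incl u t -> incl (v :: u) t.
Proof. intros Hv Hu a [<-|Ha]; [exact Hv | exact (Hu a Ha)]. Qed.

Lemma link_sub_closed P v : sub_closed P -> sub_closed (link P v).
Proof.
  intros HP t t' [Ht Hv] Hi. split.
  - apply (HP _ _ Ht), incl_cons; [left; reflexivity | intros a Ha; right; exact (Hi a Ha)].
  - intro H; exact (Hv (Hi v H)).
Qed.

Lemma avoiding_sub_closed P v : sub_closed P -> sub_closed (fun t => P t /\ ~ In v t).
Proof. intros HP t t' [Ht Hv] Hi. split; [exact (HP _ _ Ht Hi) | intro H; exact (Hv (Hi v H))]. Qed.

Lemma coboundary_across_vertex P v m (a1 psi : cochain) :
  sub_closed P ->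
  (forall s, P s -> length s = S (S (S m)) -> cobdry a1 s = 0%Z) ->
  (forall t, P t -> ~ In v t -> length t = S (S m) -> a1 t = 0%Z) ->
  (forall u, link P v u -> length u = S m -> head_slice v a1 u = cobdry psi u) ->
  forall t, P t -> length t = S (S m) ->
    a1 t = cobdry (fun u => (head_slice v a1 u - avoid v (head_slice v a1) u
                            + (- cone v psi u))%Z) t.
Proof.
  intros HP Hcoc Hoff Hlink t Ht Hl.
  rewrite cobdry_add, cobdry_sub, cobdry_opp, cobdry_cone, cobdry_avoid.
  destruct (in_dec Nat.eq_dec v t) as [Hv|Hv].
  - assert (Hstar : cobdry a1 (v :: t) = 0%Z)
      by (apply Hcoc; [apply (HP t); [exact Ht | apply incl_cons_in; [exact Hv | apply incl_refl]] | cbn; lia]).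
    rewrite cobdry_cons in Hstar.
    assert (Hcone : cone v (head_slice v a1) t = cone v (cobdry psi) t).
    { apply cone_agree. intros u Hu Hi Hlu. apply Hlink; [|lia].
      split; [apply (HP t); [exact Ht | apply incl_cons_in; assumption] | exact Hu]. }
    lia.
  - rewrite Hoff, cone_absent by assumption. lia.
Qed.

Theorem cocycle_is_coboundary_above_dim : forall m N (P : list nat -> Prop) (a : cochain),
  sub_closed P -> (forall t i, P t -> In i t -> (i < N)%nat) ->
  (forall t, P t -> NoDup t -> length t = S m -> False) ->
  (forall s, P s -> length s = S (S m) -> cobdry a s = 0%Z) ->
  exists beta, forall t, P t -> length t = S m -> a t = cobdry beta t.
Proof.
  induction m as [|m IHm].
  - intros N P a _ _ Hdim _. exists (fun _ => 0%Z). intros [|x [|y t]] Ht Hl; try discriminate.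
    exfalso. apply (Hdim [x] Ht); [repeat constructor; intros [] | reflexivity].
  - induction N as [|N IHN]; intros P a HP Hb Hdim Hcoc.
    + exists (fun _ => 0%Z). intros [|x t] Ht Hl; [discriminate|].
      specialize (Hb _ x Ht (or_introl eq_refl)). lia.
    + (* first make [a] vanish away from the star of the last vertex [N] *)
      destruct (IHN (fun t => P t /\ ~ In N t) a) as [beta' Hbeta'].
      { apply avoiding_sub_closed, HP. }
      { intros t i [Ht HN] Hi. specialize (Hb t i Ht Hi).
        assert (i <> N) by (intros ->; exact (HN Hi)). lia. }
      { intros t [Ht _]. apply Hdim, Ht. }
      { intros s [Hs _]. apply Hcoc, Hs. }
      set (a1 := fun t => (a t - cobdry beta' t)%Z).
      assert (Ha1 : forall s, P s -> length s = S (S (S m)) -> cobdry a1 s = 0%Z).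
      { intros s Hs Hl. unfold a1. rewrite cobdry_sub, cobdry_cobdry, Hcoc by assumption. lia. }
      assert (Hoff : forall t, P t -> ~ In N t -> length t = S (S m) -> a1 t = 0%Z).
      { intros t Ht HN Hl. unfold a1. rewrite <- Hbeta'; [lia | split; assumption | exact Hl]. }
      (* then bound its slice on the link of [N], which has lower dimension *)
      destruct (IHm (S N) (link P N) (head_slice N a1)) as [psi Hpsi].
      { apply link_sub_closed, HP. }
      { intros t i [Ht _] Hi. apply (Hb _ i Ht). right; exact Hi. }
      { intros t [Ht HN] Hnd Hl. apply (Hdim (N :: t) Ht); [constructor; assumption | cbn; lia]. }
      { intros s [Hs HN] Hl.
        assert (H1 := Ha1 (N :: s) Hs ltac:(cbn; lia)).
        rewrite cobdry_cons, Hoff in H1; [lia | | exact HN | exact Hl].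
        apply (HP (N :: s)); [exact Hs | intros z Hz; right; exact Hz]. }
      eexists. intros t Ht Hl.
      replace (a t) with (a1 t + cobdry beta' t)%Z by (unfold a1; lia).
      rewrite (coboundary_across_vertex P N m a1 psi HP Ha1 Hoff Hpsi t Ht Hl).
      rewrite <- cobdry_add. reflexivity.
Qed.

Lemma cone_extension P v m (a beta : cochain) :
  sub_closed P ->
  (forall s, P s -> ~ In v s -> length s = S (S m) -> cobdry a s = 0%Z) ->
  (forall u, link P v u -> length u = S m -> a u = cobdry beta u) ->
  forall s, P s -> length s = S (S m) ->
    cobdry (fun t => (avoid v a t + cone v beta t)%Z) s = 0%Z.
Proof.
  intros HP Hcoc Hlink s Hs Hl.
  rewrite cobdry_add, cobdry_avoid, cobdry_cone.
  destruct (in_dec Nat.eq_dec v s) as [Hv|Hv].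
  - rewrite Z.add_opp_r, <- cone_sub, <- (cone_zero v s). apply cone_agree.
    intros u Hu Hi Hlu. rewrite Hlink; [lia| |lia].
    split; [apply (HP s); [exact Hs | apply incl_cons_in; assumption] | exact Hu].
  - rewrite cone_absent, Hcoc by assumption. reflexivity.
Qed.

Lemma dist_self (X : MetricSpace) (x : X) : dist X x x = 0.
Proof. apply (dist_eq0 X). reflexivity. Qed.

Lemma dist_pos (X : MetricSpace) (x y : X) : x <> y -> 0 < dist X x y.
Proof.
  intros H. destruct (Rle_lt_or_eq_dec 0 _ (dist_nonneg X x y)) as [H1|H1]; [exact H1|].
  exfalso. apply H, (dist_eq0 X). symmetry; exact H1.
Qed.

Lemma list_min_pos {I : Type} (h : I -> R) (l : list I) :
  (forall i, 0 < h i) ->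
  0 < fold_right (fun i acc => Rmin (h i) acc) 1 l /\
  forall i, In i l -> fold_right (fun i acc => Rmin (h i) acc) 1 l <= h i.
Proof.
  intros Hp. induction l as [|j l [IH1 IH2]]; cbn.
  - split; [lra | intros i []].
  - split; [apply Rmin_glb_lt; auto|].
    intros i [<-|Hi]; [apply Rmin_l | eapply Rle_trans; [apply Rmin_r | auto]].
Qed.

Lemma compact_uniform_radius (X : MetricSpace) (P : X -> R -> Prop) :
  compact_space X ->
  (forall x r r', P x r -> 0 < r' -> r' <= r -> P x r') ->
  (forall x, exists r d, 0 < r /\ 0 < d /\ forall x', dist X x x' < d -> P x' r) ->
  exists r, 0 < r /\ forall x, P x r.
Proof.
  intros Hc Hmon Hloc.
  pose (U := fun (i : X * R * R) (x' : X) =>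
     0 < snd (fst i) /\ 0 < snd i /\
     (forall x'', dist X (fst (fst i)) x'' < snd i -> P x'' (snd (fst i))) /\
     dist X (fst (fst i)) x' < snd i).
  destruct (Hc _ U) as [l Hl].
  - intros [[x r] d] x' (Hr & Hd & HP & Hx'). cbn in *.
    exists (d - dist X x x'). split; [lra|].
    intros y Hy. unfold U; cbn. repeat split; auto.
    pose proof (dist_tri X x x' y). lra.
  - intros x. destruct (Hloc x) as (r & d & Hr & Hd & HP).
    exists (x, r, d). unfold U; cbn. repeat split; auto. rewrite dist_self. exact Hd.
  - pose (h := fun (i : X * R * R) => if Rlt_dec 0 (snd (fst i)) then snd (fst i) else 1).
    assert (Hh : forall i, 0 < h i) by (intros i; unfold h; destruct (Rlt_dec 0 (snd (fst i))); lra).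
    destruct (list_min_pos h l Hh) as [H1 H2].
    exists (fold_right (fun i acc => Rmin (h i) acc) 1 l). split; [exact H1|].
    intros x. destruct (Hl x) as [[[x0 r] d] [Hin (Hr & Hd & HP & Hx)]]. cbn in *.
    specialize (H2 _ Hin). unfold h in H2. cbn in H2. destruct (Rlt_dec 0 r); [|lra].
    apply (Hmon x r); auto.
Qed.

Lemma lebesgue_number (X : MetricSpace) (U : fcover X) :
  compact_space X -> open_fcover U ->
  exists lam, 0 < lam /\ forall x, exists i, (i < fc_size U)%nat /\
    forall w, dist X x w < lam -> fc_set U i w.
Proof.
  intros Hc [HUo HUc].
  apply compact_uniform_radius; [exact Hc | |].
  - intros x r r' [i [Hi H]] _ Hle. exists i; split; [exact Hi|]. intros w Hw; apply H; lra.
  - intros x. destruct (HUc x) as [i [Hi Hx]].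
    destruct (HUo i Hi x Hx) as [r [Hr Hball]].
    exists (r / 2), (r / 2). repeat split; try lra. intros x' Hx'. exists i. split; [exact Hi|].
    intros w Hw. apply Hball. pose proof (dist_tri X x x' w). lra.
Qed.

Lemma eps_mapping_fibre_radius (X Y : MetricSpace) (f : X -> Y) (eps lam : R) :
  compact_space X -> continuous f -> eps_mapping eps f -> eps < lam ->
  forall x0, exists rho, 0 < rho /\
    forall z, dist Y (f z) (f x0) < rho -> dist X z x0 < lam.
Proof.
  intros Hc Hf Heps Hlam x0.
  destruct (Heps (f x0) (ex_intro _ x0 eq_refl)) as [dd [Hdd Hfibre]].
  destruct (compact_uniform_radius X (fun z r => (exists w, f w = f x0 /\ dist X z w < lam - dd) \/
               r <= dist Y (f z) (f x0)) Hc) as [rho [Hrho HP]].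
  - intros z r r' [H|H] _ Hle; [left; exact H | right; lra].
  - intros z. destruct (classic (f z = f x0)) as [Heq|Hne].
    + exists 1, (lam - dd). repeat split; try lra. intros z' Hz'. left. exists z.
      split; [exact Heq | rewrite dist_sym; exact Hz'].
    + pose proof (dist_pos Y _ _ Hne) as HD.
      destruct (Hf z (dist Y (f z) (f x0) / 2)) as [d [Hd Hcont]]; [lra|].
      exists (dist Y (f z) (f x0) / 2), d. repeat split; try lra. intros z' Hz'. right.
      specialize (Hcont z' Hz'). pose proof (dist_tri Y (f z) (f z') (f x0)). lra.
  - exists rho. split; [exact Hrho|]. intros z Hz. destruct (HP z) as [[w [Hw Hzw]]|H]; [|lra].
    specialize (Hfibre w x0 Hw eq_refl). pose proof (dist_tri X z w x0). lra.
Qed.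

Lemma image_complement_open (X Y : MetricSpace) (f : X -> Y) :
  compact_space X -> continuous f -> is_open (fun y : Y => forall x, f x <> y).
Proof.
  intros Hc Hf y Hy.
  destruct (compact_uniform_radius X (fun x r => r <= dist Y (f x) y) Hc) as [r [Hr HP]].
  - intros x r r' H _ Hle; lra.
  - intros x. pose proof (dist_pos Y _ _ (Hy x)) as HD.
    destruct (Hf x (dist Y (f x) y / 2)) as [d [Hd Hcont]]; [lra|].
    exists (dist Y (f x) y / 2), d. repeat split; try lra. intros x' Hx'.
    specialize (Hcont x' Hx'). pose proof (dist_tri Y (f x) (f x') y). lra.
  - exists r. split; [exact Hr|]. intros y' Hy' x Hfx. specialize (HP x). rewrite Hfx in HP.
    rewrite dist_sym in HP. lra.
Qed.

Definition in_nerve {X : Type} (U : fcover X) (s : list nat) : Prop :=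
  Forall (fun i => (i < fc_size U)%nat) s /\ exists x, Forall (fun i => fc_set U i x) s.

Lemma in_nerve_sub_closed {X : Type} (U : fcover X) : sub_closed (in_nerve U).
Proof.
  intros t t' [Hb [x Hx]] Hi. split; [|exists x]; eapply incl_Forall; eassumption.
Qed.

Definition merge_cover {T : Type} (W : fcover T) (good : nat -> bool) : fcover T :=
  {| fc_size := S (fc_size W);
     fc_set := fun j y =>
       ((j < fc_size W)%nat /\ good j = true /\ fc_set W j y) \/
       (j = fc_size W /\ exists k, (k < fc_size W)%nat /\ good k = false /\ fc_set W k y) |}.

Lemma merge_cover_kept {T : Type} (W : fcover T) good j y :
  j <> fc_size W -> fc_set (merge_cover W good) j y ->
  (j < fc_size W)%nat /\ good j = true /\ fc_set W j y.
Proof. intros Hne [H|[H _]]; [exact H | contradiction]. Qed.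

Lemma merge_cover_open (X : MetricSpace) (W : fcover X) good :
  open_fcover W -> open_fcover (merge_cover W good).
Proof.
  intros [HWo HWc]. split.
  - intros j _ y [[Hj [Hg HW]]|[Hj [k [Hk [Hb HW]]]]].
    + destruct (HWo j Hj y HW) as [r [Hr Hball]]. exists r; split; [exact Hr|].
      intros y' Hy'. left. auto.
    + destruct (HWo k Hk y HW) as [r [Hr Hball]]. exists r; split; [exact Hr|].
      intros y' Hy'. right. split; [exact Hj|]. exists k; auto.
  - intros y. destruct (HWc y) as [k [Hk HW]]. destruct (good k) eqn:Hg.
    + exists k. split; [cbn; lia|]. left; auto.
    + exists (fc_size W). split; [cbn; lia|]. right. split; [reflexivity|]. exists k; auto.
Qed.

(** Merging does not raise the order: a point of the merged member lies in
    some non-flagged member, which differs from all flagged ones. *)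
Lemma merge_cover_order {T : Type} (W : fcover T) good n :
  order_le W n -> order_le (merge_cover W good) n.
Proof.
  intros HW L HND HF Hlen [y Hy]. rewrite Forall_forall in HF, Hy.
  set (N := fc_size W).
  assert (Hkept : forall i, In i L -> i <> N -> (i < N)%nat /\ good i = true /\ fc_set W i y)
    by (intros i Hi Hne; exact (merge_cover_kept W good i y Hne (Hy i Hi))).
  destruct (in_dec Nat.eq_dec N L) as [HinN|HnN].
  - destruct (Hy N HinN) as [[Hlt _]|[_ [k [Hk [Hbad HWk]]]]]; [lia|].
    pose (h := fun i => if Nat.eq_dec i N then k else i).
    apply (HW (map h L)).
    + apply NoDup_map_NoDup_ForallPairs; [|exact HND]. intros a b Ha Hb Heq. unfold h in Heq.
      destruct (Nat.eq_dec a N) as [Ea|Ea]; destruct (Nat.eq_dec b N) as [Eb|Eb]; try congruence.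
      * destruct (Hkept b Hb Eb) as [_ [Hg _]]. congruence.
      * destruct (Hkept a Ha Ea) as [_ [Hg _]]. congruence.
    + rewrite Forall_map, Forall_forall. intros i Hi. unfold h.
      destruct (Nat.eq_dec i N) as [|Ei]; [exact Hk | apply (Hkept i Hi Ei)].
    + rewrite length_map; exact Hlen.
    + exists y. rewrite Forall_map, Forall_forall. intros i Hi. unfold h.
      destruct (Nat.eq_dec i N) as [|Ei]; [exact HWk | apply (Hkept i Hi Ei)].
  - assert (Hne : forall i, In i L -> i <> N) by (intros i Hi ->; exact (HnN Hi)).
    apply (HW L HND).
    + rewrite Forall_forall. intros i Hi. apply (Hkept i Hi (Hne i Hi)).
    + exact Hlen.
    + exists y. rewrite Forall_forall. intros i Hi. apply (Hkept i Hi (Hne i Hi)).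
Qed.

(** A simplicial map [g] from the nerve of a cover [W] of [Y], minus one
    extra vertex [N] whose member misses [f X], to the nerve of a cover [U] of
    [X], compatible with [f]. *)
Record nerve_map_over {X Y : MetricSpace} (f : X -> Y) (U : fcover X) (W : fcover Y)
    (N : nat) (g : nat -> nat) : Prop := {
  nm_size : fc_size W = S N;
  nm_junk : forall x, ~ fc_set W N (f x);
  nm_bound : forall j, (g j < fc_size U)%nat;
  nm_pullback : forall j x, (j < N)%nat -> fc_set W j (f x) -> fc_set U (g j) x;
  nm_simplex : forall t y, t <> [] -> Forall (fun i => (i < N)%nat) t ->
    Forall (fun i => fc_set W i y) t -> exists x, Forall (fun i => fc_set U (g i) x) t }.

(** Pull the cocycle [alpha] back along [g] to the
    nerve of [W] minus [N]; since [W] has order [<= n+1], the link of [N] has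
    dimension [<= n], so the pulled-back cocycle bounds there and extends
    across the star of [N] by a cone. *)
Lemma pullback_cocycle_extends (X Y : MetricSpace) (f : X -> Y) (n : nat)
    (U : fcover X) (alpha : cochain) (W : fcover Y) (N : nat) (g : nat -> nat) :
  is_cocycle U (S n) alpha -> order_le W (S n) -> nerve_map_over f U W N g ->
  exists cY, is_cocycle W (S n) cY /\ forall t, ~ In N t -> cY t = alpha (map g t).
Proof.
  intros Hcoc Hord Hg.
  set (a := fun t => alpha (map g t)).
  assert (HWbound : forall s i, in_nerve W s -> In i s -> (i < S N)%nat).
  { intros s i [Hb _] Hi. rewrite Forall_forall in Hb. rewrite <- (nm_size _ _ _ _ _ Hg).
    exact (Hb i Hi). }
  assert (Ha : forall s, in_nerve W s -> ~ In N s -> length s = S (S (S n)) ->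
                 cobdry a s = 0%Z).
  { intros s Hs HN Hl. unfold a. rewrite cobdry_map. apply Hcoc.
    split; [rewrite length_map; exact Hl | split].
    - rewrite Forall_map, Forall_forall. intros i _. apply (nm_bound _ _ _ _ _ Hg).
    - destruct Hs as [Hb [y Hy]].
      assert (Hlt : Forall (fun i => (i < N)%nat) s).
      { rewrite Forall_forall. intros i Hi. assert (i <> N) by (intros ->; exact (HN Hi)).
        specialize (HWbound s i (conj Hb (ex_intro _ y Hy)) Hi). lia. }
      destruct (nm_simplex _ _ _ _ _ Hg s y) as [x Hx]; [now intros -> | exact Hlt | exact Hy |].
      exists x. rewrite Forall_map. exact Hx. }
  destruct (cocycle_is_coboundary_above_dim (S n) (S N) (link (in_nerve W) N) a)
    as [beta Hbeta].
  { apply link_sub_closed, in_nerve_sub_closed. }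
  { intros t i [Ht _] Hi. apply (HWbound (N :: t)); [exact Ht | right; exact Hi]. }
  { intros t [[Hb Hpt] HN] Hnd Hl. apply (Hord (N :: t)); [constructor; assumption | exact Hb
      | cbn; lia | exact Hpt]. }
  { intros s [Hs HN] Hl. apply Ha; [|exact HN|exact Hl].
    apply (in_nerve_sub_closed W (N :: s)); [exact Hs | intros z Hz; right; exact Hz]. }
  exists (fun t => (avoid N a t + cone N beta t)%Z). split.
  - intros s [Hl Hs].
    exact (cone_extension (in_nerve W) N (S n) a beta (in_nerve_sub_closed W) Ha Hbeta s Hs Hl).
  - intros t HN. unfold avoid. rewrite cone_absent by exact HN.
    destruct (in_dec Nat.eq_dec N t); [contradiction | apply Z.add_0_r].
Qed.

(** The extended class of [Y] is sent by [H^(n+1)(f)] to a nonzero class: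
    a refinement killing it would, composed with [g], kill [alpha]. *)
Lemma pullback_class_nonzero (X Y : MetricSpace) (f : X -> Y) (n : nat)
    (U : fcover X) (alpha : cochain) (W : fcover Y) (N : nat) (g : nat -> nat) :
  cech_rep (S n) U alpha -> ~ cech_class_zero (S n) U alpha ->
  open_fcover W -> order_le W (S n) -> nerve_map_over f U W N g ->
  cech_map_nonzero f (S n).
Proof.
  intros [_ Hcoc] Hnz HWo Hord Hg.
  destruct (pullback_cocycle_extends X Y f n U alpha W N g Hcoc Hord Hg) as [cY [HcY HcYa]].
  exists W, cY. split; [split; assumption|].
  intros (W2 & mu & HW2o & Href & Hcob). apply Hnz.
  assert (Hmu : forall j x, (j < fc_size W2)%nat -> fc_set W2 j x ->
                  (mu j < N)%nat /\ fc_set W (mu j) (f x)).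
  { intros j x Hj Hx. destruct (Href j Hj) as [Hb Hsub]. specialize (Hsub x Hx).
    cbn in Hb, Hsub. rewrite (nm_size _ _ _ _ _ Hg) in Hb. split; [|exact Hsub].
    assert (mu j <> N) by (intros He; rewrite He in Hsub; exact (nm_junk _ _ _ _ _ Hg x Hsub)).
    lia. }
  exists W2, (fun j => g (mu j)). split; [exact HW2o | split].
  - intros j Hj. split; [apply (nm_bound _ _ _ _ _ Hg)|]. intros x Hx.
    destruct (Hmu j x Hj Hx) as [Hlt HW]. exact (nm_pullback _ _ _ _ _ Hg _ x Hlt HW).
  - destruct Hcob as [b Hb]. exists b. intros s Hs. rewrite <- Hb by exact Hs.
    rewrite HcYa, map_map; [reflexivity|].
    destruct Hs as [_ [Hs [x Hx]]]. rewrite Forall_forall in Hs, Hx.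
    intros Hin. apply in_map_iff in Hin as [j [Hj Hin]].
    destruct (Hmu j x (Hs j Hin) (Hx j Hin)) as [Hlt _]. lia.
Qed.

Lemma close_images_close (X Y : MetricSpace) (f : X -> Y) (lam : R) (rho : X -> R) :
  (forall x0, 0 < rho x0 /\ forall z, dist Y (f z) (f x0) < rho x0 -> dist X z x0 < lam) ->
  forall a b y, dist Y (f a) y < rho a / 2 -> dist Y (f b) y < rho b / 2 -> dist X a b < lam.
Proof.
  intros Hrho a b y Ha Hb.
  pose proof (dist_tri Y (f a) y (f b)). pose proof (dist_sym Y y (f b)).
  pose proof (dist_sym Y (f a) (f b)). pose proof (dist_sym X b a).
  destruct (Rle_lt_dec (rho a) (rho b)).
  - apply (proj2 (Hrho b)). lra.
  - rewrite dist_sym. apply (proj2 (Hrho a)). lra.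
Qed.

Definition ball_or_off {X Y : MetricSpace} (f : X -> Y) (rho : X -> R)
    (c : option X) (y : Y) : Prop :=
  match c with
  | Some x0 => dist Y (f x0) y < rho x0 / 2
  | None => forall x, f x <> y
  end.

Lemma ball_cover_refinement (X Y : MetricSpace) (f : X -> Y) (n : nat) (rho : X -> R) :
  compact_space Y -> dim_le Y n -> (forall x, 0 < rho x) ->
  is_open (fun y => forall x, f x <> y) ->
  exists (W : fcover Y) (center : nat -> option X), open_fcover W /\ order_le W n /\
    forall j y, (j < fc_size W)%nat -> fc_set W j y -> ball_or_off f rho (center j) y.
Proof.
  intros HcY HdY Hrho Hoff.
  assert (Hopen : forall c, is_open (ball_or_off f rho c)).
  { intros [x0|] y Hy; [|exact (Hoff y Hy)]. cbn in Hy |- *.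
    exists (rho x0 / 2 - dist Y (f x0) y). split; [lra|].
    intros y' Hy'. pose proof (dist_tri Y (f x0) y y'). lra. }
  destruct (HcY (option X) (ball_or_off f rho) Hopen) as [l Hl].
  { intros y. destruct (classic (exists x, f x = y)) as [[x <-]|Hno].
    - exists (Some x). cbn. rewrite dist_self. apply Rdiv_lt_0_compat; [apply Hrho | lra].
    - exists None. intros x Hx. apply Hno. exists x; exact Hx. }
  set (V := {| fc_size := length l; fc_set := fun k => ball_or_off f rho (nth k l None) |}).
  assert (HVo : open_fcover V).
  { split; [intros i _; apply Hopen|].
    intros y. destruct (Hl y) as [c [Hin Hy]].
    destruct (In_nth l c None Hin) as [k [Hk Hnth]]. exists k. split; [exact Hk|].
    cbn. rewrite Hnth. exact Hy. }
  destruct (HdY V HVo) as (W & HWo & [lamV HlamV] & HWord).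
  exists W, (fun j => nth (lamV j) l None). split; [exact HWo | split; [exact HWord|]].
  intros j y Hj Hy. exact (proj2 (HlamV j Hj) y Hy).
Qed.

(** In the cover given by
    [ball_cover_refinement], merge the members lying off [f X]; sending a kept
    member to a member of [U] containing the [lam]-ball about its centre gives
    a nerve map over [f]. *)
Lemma nerve_map_exists (X Y : MetricSpace) (f : X -> Y) (n : nat) (U : fcover X) (lam : R) :
  compact_space Y -> dim_le Y n -> (0 < fc_size U)%nat ->
  (forall x, exists i, (i < fc_size U)%nat /\ forall w, dist X x w < lam -> fc_set U i w) ->
  (forall x0, exists rho, 0 < rho /\
     forall z, dist Y (f z) (f x0) < rho -> dist X z x0 < lam) ->
  is_open (fun y => forall x, f x <> y) ->
  exists W N g, open_fcover W /\ order_le W n /\ nerve_map_over f U W N g.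
Proof.
  intros HcY HdY HU Hleb Hfib Hoff.
  destruct (choice _ Hleb) as [leb Hleb'].
  destruct (choice _ Hfib) as [rho Hrho].
  destruct (ball_cover_refinement X Y f n rho HcY HdY (fun x => proj1 (Hrho x)) Hoff)
    as (W & center & HWo & HWord & Hcenter).
  set (good := fun j => match center j with Some _ => true | None => false end).
  set (g := fun j => match center j with Some x0 => leb x0 | None => 0%nat end).
  assert (Hkept : forall j y, j <> fc_size W -> fc_set (merge_cover W good) j y ->
     (j < fc_size W)%nat /\ exists x0, g j = leb x0 /\ dist Y (f x0) y < rho x0 / 2).
  { intros j y Hne Hy. destruct (merge_cover_kept W good j y Hne Hy) as [Hj [Hg HW]].
    split; [exact Hj|]. specialize (Hcenter j y Hj HW). unfold good, g in *.
    destruct (center j) as [x0|]; [exists x0; split; [reflexivity | exact Hcenter] | discriminate]. }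
  exists (merge_cover W good), (fc_size W), g.
  split; [apply merge_cover_open, HWo | split; [apply merge_cover_order, HWord|]].
  split.
  - reflexivity.
  - intros x [[Hlt _]|[_ [k [Hk [Hbad HW]]]]]; [lia|].
    specialize (Hcenter k (f x) Hk HW). unfold good in Hbad.
    destruct (center k); [discriminate | exact (Hcenter x eq_refl)].
  - intros j. unfold g. destruct (center j) as [x0|]; [apply Hleb' | exact HU].
  - intros j x Hj Hx. destruct (Hkept j (f x) ltac:(lia) Hx) as [_ [x0 [-> Hd]]].
    apply (proj2 (Hleb' x0)). apply (close_images_close X Y f lam rho Hrho x0 x (f x) Hd).
    rewrite dist_self. apply Rdiv_lt_0_compat; [apply Hrho | lra].
  - intros [|i0 t] y Hne Hlt Hy; [contradiction|]. rewrite Forall_forall in Hlt, Hy.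
    assert (Hc : forall i, In i (i0 :: t) ->
                   exists x0, g i = leb x0 /\ dist Y (f x0) y < rho x0 / 2).
    { intros i Hi. specialize (Hlt i Hi). apply (Hkept i y); [lia | exact (Hy i Hi)]. }
    destruct (Hc i0 (or_introl eq_refl)) as [x [_ Hx]].
    exists x. rewrite Forall_forall. intros i Hi. destruct (Hc i Hi) as [x0 [-> Hd]].
    apply (proj2 (Hleb' x0)). exact (close_images_close X Y f lam rho Hrho x0 x y Hd Hx).
Qed.

(** A cover carrying a nonzero class of positive degree is nonempty: over an
    empty space every cochain is a coboundary. *)
Lemma nonzero_class_cover_nonempty (X : MetricSpace) (n : nat) (U : fcover X) (alpha : cochain) :
  open_fcover U -> ~ cech_class_zero (S n) U alpha -> (0 < fc_size U)%nat.
Proof.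
  intros HUo Hnz. destruct (Nat.eq_dec (fc_size U) 0) as [H0|]; [|lia].
  exfalso. apply Hnz. exists U, (fun i => i). split; [exact HUo | split].
  - intros j Hj. split; [exact Hj | intros x Hx; exact Hx].
  - exists (fun _ => 0%Z). intros s [_ [_ [x _]]].
    destruct (proj2 HUo x) as [i [Hi _]]. lia.
Qed.

Theorem theorem1p15 (X Y : MetricSpace) (n : nat) :
  compact_space X -> compact_space Y -> (1 <= n)%nat ->
  covering_dim X n -> covering_dim Y n ->
  cech_nonzero X n ->
  exists eps : R, 0 < eps /\
    forall f : X -> Y, continuous f -> eps_mapping eps f -> cech_map_nonzero f n.
Proof.
  intros HcX HcY Hn _ [HdY _] [U [alpha [Hrep Hnz]]].
  destruct n as [|n]; [lia|].
  pose proof (nonzero_class_cover_nonempty X n U alpha (proj1 Hrep) Hnz) as HU.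
  destruct (lebesgue_number X U HcX (proj1 Hrep)) as [lam [Hlam Hleb]].
  exists (lam / 2). split; [lra|]. intros f Hf Heps.
  destruct (nerve_map_exists X Y f (S n) U lam HcY HdY HU Hleb
              (eps_mapping_fibre_radius X Y f (lam / 2) lam HcX Hf Heps ltac:(lra))
              (image_complement_open X Y f HcX Hf)) as (W & N & g & HWo & Hord & Hg).
  exact (pullback_class_nonzero X Y f n U alpha W N g Hrep Hnz HWo Hord Hg).
Qed.
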